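(* Let $\mathbb{D}$ be a disk in a Riemann surface with coordinate $\theta$ centered at $0$, let $V$ be a rank $2$ holomorphic vector bundle on $\mathbb{D}$ and $\beta$ a holomorphic section of $K\otimes S^2V$ on $\mathbb{D}$. Assume $\Delta:=\Delta_\beta\neq 0$, $\Delta^{-1}(0)=\{0\}$, and $\Delta$ has a holomorphic square root on $\mathbb{D}$. Let $r$ (resp. $z$) be the vanishing order of $\Delta$ (resp. $\beta$) at $0$. Then: (i) $r/2\geq z$; (ii) if $L_1,L_2\subset V$ are the line subbundles with $\beta\in H^0(K\otimes L_1\otimes L_2)$, there is an exact sequence of sheaves $$0\to L_1\oplus L_2\to V\to\mathcal{O}/\theta^{r/2-z}\mathcal{O}\to 0.$$
   Context: $K$ is the canonical bundle (trivial on the disk). The discriminant is defined fibrewise: for a basis $x,y$ of a $2$-dimensional space and $f=ax^2+bxy+cy^2$, $\Delta_f=(b^2-4ac)(x\wedge y)^2$; $\Delta_\beta$ is the section $\Delta\circ\beta$ of $K^2\otimes(\Lambda^2V)^2$. When $\Delta_\beta\neq0$ has a square root, there are two distinct line subbundles $L_1,L_2\subset V$ with $\beta$ a section of $K\otimes L_1\otimes L_2$. *)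

From Stdlib Require Import Reals.
From Coquelicot Require Import Coquelicot.

Open Scope C_scope.

Definition near_ball (p : C) (e : R) (z : C) : Prop := (Cmod (z - p) < e)%R.

Definition holo_on (U : C -> Prop) (f : C -> C) : Prop :=
  forall z, U z -> ex_derive (K := C_AbsRing) (V := C_NormedModule) f z.

Definition germ_holo (p : C) (f : C -> C) : Prop :=
  exists e : R, (0 < e)%R /\ holo_on (near_ball p e) f.

Definition eq_near (p : C) (f g : C -> C) : Prop :=
  exists e : R, (0 < e)%R /\ forall w, near_ball p e w -> f w = g w.

Definition in_ideal_pow (p : C) (k : nat) (h : C -> C) : Prop :=
  exists u, germ_holo p u /\ eq_near p h (fun w => (w ^ k) * u w).

Definition vorder0 (f : C -> C) (n : nat) : Prop :=
  exists e : R, (0 < e)%R /\ exists g, holo_on (near_ball 0 e) g /\ g 0 <> 0 /\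
    forall w, near_ball 0 e w -> f w = (w ^ n) * g w.

(* vanishing order at 0 of the section beta = a x^2 + b xy + c y^2 of
   K (x) S^2 V (V trivialised by the frame x,y; K by dtheta):
   theta^n divides all coefficients, and not theta^(n+1). *)
Definition sec_vorder0 (a b c : C -> C) (n : nat) : Prop :=
  exists e : R, (0 < e)%R /\ exists a' b' c',
    holo_on (near_ball 0 e) a' /\ holo_on (near_ball 0 e) b' /\
    holo_on (near_ball 0 e) c' /\
    ~ (a' 0 = 0 /\ b' 0 = 0 /\ c' 0 = 0) /\
    forall w, near_ball 0 e w ->
      a w = (w ^ n) * a' w /\ b w = (w ^ n) * b' w /\ c w = (w ^ n) * c' w.

Definition discr (a b c : C -> C) (w : C) : C := b w * b w - 4 * a w * c w.

(* Exactness, on the stalk at p, of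
     0 -> L1 (+) L2 -> V -> O / theta^k O -> 0
   where L_i = O.v_i with v_i = (p_i, q_i) nowhere vanishing, the first map is
   (s,t) |-> s v1 + t v2 and the second is (x,y) |-> phi1 x + phi2 y mod theta^k. *)
Definition stalk_exact (p : C) (k : nat) (p1 q1 p2 q2 phi1 phi2 : C -> C) : Prop :=
  (forall s t, germ_holo p s -> germ_holo p t ->
     eq_near p (fun w => s w * p1 w + t w * p2 w) (fun _ => 0) ->
     eq_near p (fun w => s w * q1 w + t w * q2 w) (fun _ => 0) ->
     eq_near p s (fun _ => 0) /\ eq_near p t (fun _ => 0)) /\
  (forall x y, germ_holo p x -> germ_holo p y ->
     (in_ideal_pow p k (fun w => phi1 w * x w + phi2 w * y w) <->
      exists s t, germ_holo p s /\ germ_holo p t /\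
        eq_near p x (fun w => s w * p1 w + t w * p2 w) /\
        eq_near p y (fun w => s w * q1 w + t w * q2 w))) /\
  (forall g, germ_holo p g ->
     exists x y, germ_holo p x /\ germ_holo p y /\
       in_ideal_pow p k (fun w => phi1 w * x w + phi2 w * y w - g w)).

(* (i): [Delta = theta^(2 z) (b'^2 - 4 a' c')] and [Delta = theta^r g] with [g 0 <> 0] force [2 z <= r].
   (ii): let [d = det (v1, v2)].  The map [(x, y) |-> det (v1, (x, y))] is onto [O] because [v1] does
   not vanish, and [det (v1, s v1 + t v2) = t d]; so the kernel of [V -> O / theta^k O] is
   [L1 (+) L2] as soon as [d = theta^k u] with [u] a unit.  Since [beta = f v1 v2] with [v1 v2] nowhere
   zero, [f = theta^z f'] with [f'] a unit, and [Delta = (f d)^2]; hence [(f' d)^2 = theta^m g] with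
   [m = r - 2 z].  If [s] is a holomorphic square root of [g], then [f' d / (theta^(m/2) s)] is
   continuous with square [1] on a punctured disk, hence constant as the punctured disk is connected.
   For odd [m] the same argument applied to the odd function [w |-> f' d (w^2) / (w^m s (w^2))] gives
   a contradiction. *)

From Stdlib Require Import Reals Lra Lia Classical.
From Coquelicot Require Import Coquelicot.
Open Scope C_scope.

(** * Complex differentiability and germs *)

Notation Cderivable f x := (ex_derive (K := C_AbsRing) (V := C_NormedModule) f x).
Notation is_Cderive f x l := (is_derive (K := C_AbsRing) (V := C_NormedModule) f x l).

(* [germ_holo p f] and [eq_near p f g] unfold to [near p (fun w => Cderivable f w)] and
   [near p (fun w => f w = g w)]. *)
Definition near (p : C) (P : C -> Prop) : Prop :=
  exists e : R, (0 < e)%R /\ forall w, near_ball p e w -> P w.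

Definition Ccontinuous_at (f : C -> C) (x : C) : Prop :=
  forall eps : R, (0 < eps)%R -> near x (fun y => Cmod (f y - f x) < eps)%R.

(* Coquelicot's rules for products and compositions are stated for
   [AbsRing_NormedModule C_AbsRing], which is not convertible to [C_NormedModule]. *)
Lemma is_Cderive_AbsRing (f : C -> C) (x l : C) :
  is_Cderive f x l <-> is_derive (K := C_AbsRing) (V := AbsRing_NormedModule C_AbsRing) f x l.
Proof.
  split; intros [_ H]; (split; [apply is_linear_scal_l|]);
    intros x' Hx' eps; exact (H x' Hx' eps).
Qed.

Lemma is_Cderive_eps (f : C -> C) (x l : C) :
  (forall eps : R, (0 < eps)%R -> exists d : R, (0 < d)%R /\ forall y, near_ball x d y ->
     (Cmod (f y - f x - (y - x) * l) <= eps * Cmod (y - x))%R) ->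
  is_Cderive f x l.
Proof.
  intros H. split; [apply is_linear_scal_l|].
  intros x' Hx'.
  apply (is_filter_lim_locally_unique (K := C_AbsRing) (V := AbsRing_NormedModule C_AbsRing)) in Hx'.
  subst x'. intros eps.
  destruct (H eps (cond_pos eps)) as [d [Hd Hfd]].
  exists (mkposreal d Hd). exact Hfd.
Qed.

Lemma Cderivable_continuous (f : C -> C) (x : C) : Cderivable f x -> Ccontinuous_at f x.
Proof.
  intros Hf eps Heps.
  destruct (proj1 (filterlim_locally_ball_norm (F := @locally (AbsRing_UniformSpace C_AbsRing) x) f (f x))
              (ex_derive_continuous f x Hf) (mkposreal eps Heps)) as [d Hd].
  exists d. split; [apply cond_pos | exact Hd].
Qed.

Lemma Cderivable_const (a x : C) : Cderivable (fun _ => a) x.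
Proof. eexists. apply (is_derive_const (K := C_AbsRing) (V := C_NormedModule)). Qed.

Lemma Cderivable_id (x : C) : Cderivable (fun y => y) x.
Proof. exists one. apply is_Cderive_AbsRing, (is_derive_id (K := C_AbsRing)). Qed.

Lemma Cderivable_plus (f g : C -> C) (x : C) :
  Cderivable f x -> Cderivable g x -> Cderivable (fun y => f y + g y) x.
Proof. intros [l1 H1] [l2 H2]. eexists. exact (is_derive_plus f g x _ _ H1 H2). Qed.

Lemma Cderivable_opp (f : C -> C) (x : C) : Cderivable f x -> Cderivable (fun y => - f y) x.
Proof. intros [l H]. eexists. exact (is_derive_opp f x _ H). Qed.

Lemma Cderivable_minus (f g : C -> C) (x : C) :
  Cderivable f x -> Cderivable g x -> Cderivable (fun y => f y - g y) x.
Proof. intros [l1 H1] [l2 H2]. eexists. exact (is_derive_minus f g x _ _ H1 H2). Qed.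

Lemma Cderivable_mult (f g : C -> C) (x : C) :
  Cderivable f x -> Cderivable g x -> Cderivable (fun y => f y * g y) x.
Proof.
  intros [l1 H1] [l2 H2]. eexists. apply is_Cderive_AbsRing.
  apply (is_derive_mult (K := C_AbsRing)); [apply is_Cderive_AbsRing, H1 | apply is_Cderive_AbsRing, H2 |].
  exact Cmult_comm.
Qed.

Lemma Cderivable_comp (f g : C -> C) (x : C) :
  Cderivable f (g x) -> Cderivable g x -> Cderivable (fun y => f (g y)) x.
Proof.
  intros [l1 H1] [l2 H2]. eexists.
  exact (is_derive_comp f g x l1 l2 H1 (proj1 (is_Cderive_AbsRing _ _ _) H2)).
Qed.

Lemma Cderivable_pow (f : C -> C) (n : nat) (x : C) :
  Cderivable f x -> Cderivable (fun y => f y ^ n) x.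
Proof.
  intros Hf. induction n as [|n IH]; simpl.
  - apply Cderivable_const.
  - apply Cderivable_mult; assumption.
Qed.

Lemma Cmod_reverse_triangle (a b : C) : (Cmod a - Cmod b <= Cmod (a - b))%R.
Proof.
  assert (H := Cmod_triangle (a - b) b). replace (a - b + b) with a in H by ring. lra.
Qed.

Lemma Cmod_sub_sym (a b : C) : Cmod (a - b) = Cmod (b - a).
Proof. replace (a - b) with (- (b - a)) by ring. apply Cmod_opp. Qed.

Lemma is_Cderive_inv (x : C) : x <> 0 -> is_Cderive Cinv x (- / (x * x)).
Proof.
  intros Hx. apply is_Cderive_eps. intros eps Heps.
  assert (Hm : (0 < Cmod x)%R) by (apply Cmod_gt_0; auto).
  set (m := Cmod x) in *.
  exists (Rmin (m / 2) (eps * (m * m * m) / 2)). split.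
  { apply Rmin_pos; [lra|]. assert (0 < m * m * m)%R by (repeat apply Rmult_lt_0_compat; lra). nra. }
  intros y Hy. unfold near_ball in Hy.
  assert (Hy1 : (Cmod (y - x) < m / 2)%R) by (eapply Rlt_le_trans; [exact Hy | apply Rmin_l]).
  assert (Hy2 : (Cmod (y - x) < eps * (m * m * m) / 2)%R)
    by (eapply Rlt_le_trans; [exact Hy | apply Rmin_r]).
  assert (Hym : (m / 2 <= Cmod y)%R).
  { assert (H := Cmod_reverse_triangle x (x - y)).
    replace (x - (x - y)) with y in H by ring. rewrite Cmod_sub_sym in H. fold m in H. lra. }
  assert (Hy0 : y <> 0) by (intro E; subst y; rewrite Cmod_0 in Hym; lra).
  replace (/ y - / x - (y - x) * - / (x * x)) with ((y - x) * (y - x) / (x * x * y)) by (field; auto).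
  rewrite Cmod_div by (repeat apply Cmult_neq_0; auto).
  rewrite !Cmod_mult. fold m. set (t := Cmod (y - x)) in *. set (n := Cmod y) in *.
  assert (Ht : (0 <= t)%R) by apply Cmod_ge_0.
  apply Rle_div_l; [apply Rmult_lt_0_compat; [apply Rmult_lt_0_compat|]; lra|].
  assert (m * m * m <= 2 * (m * m * n))%R by (assert (0 < m * m)%R by nra; nra).
  assert (t <= eps * (m * m * n))%R by nra.
  nra.
Qed.

Lemma Cderivable_inv (f : C -> C) (x : C) : Cderivable f x -> f x <> 0 -> Cderivable (fun y => / f y) x.
Proof.
  intros Hf Hfx. apply (Cderivable_comp Cinv f x); [|exact Hf].
  eexists. apply is_Cderive_inv, Hfx.
Qed.

Lemma Cderivable_div (f g : C -> C) (x : C) :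
  Cderivable f x -> Cderivable g x -> g x <> 0 -> Cderivable (fun y => f y / g y) x.
Proof. intros Hf Hg Hgx. apply Cderivable_mult; [exact Hf | apply Cderivable_inv; assumption]. Qed.

Lemma near_ball_center (p : C) (e : R) : (0 < e)%R -> near_ball p e p.
Proof. intros He. unfold near_ball. replace (p - p) with (RtoC 0) by ring. rewrite Cmod_0. exact He. Qed.

Lemma near_ball_0 (e : R) (w : C) : near_ball 0 e w <-> (Cmod w < e)%R.
Proof. unfold near_ball. replace (w - 0) with w by ring. tauto. Qed.

Lemma near_and (p : C) (P Q : C -> Prop) : near p P -> near p Q -> near p (fun w => P w /\ Q w).
Proof.
  intros [e1 [He1 H1]] [e2 [He2 H2]]. exists (Rmin e1 e2). split; [apply Rmin_pos; assumption|].
  intros w Hw. unfold near_ball in *.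
  split; [apply H1 | apply H2]; eapply Rlt_le_trans; eauto; [apply Rmin_l | apply Rmin_r].
Qed.

Lemma near_mono (p : C) (P Q : C -> Prop) : near p P -> (forall w, P w -> Q w) -> near p Q.
Proof. intros [e [He H]] HPQ. exists e. split; auto. Qed.

Lemma near_center (p : C) (P : C -> Prop) : near p P -> P p.
Proof. intros [e [He H]]. apply H, near_ball_center, He. Qed.

Lemma near_punctured_point (p : C) (P : C -> Prop) : near p P -> exists w, w <> p /\ P w.
Proof.
  intros [e [He H]]. exists (p + RtoC (e / 2)). split.
  - intro E. assert (E' : RtoC (e / 2) = 0)
      by (replace (RtoC (e / 2)) with (p + RtoC (e / 2) - p) by ring; rewrite E; ring).
    injection E'. lra.
  - apply H. unfold near_ball. replace (p + RtoC (e / 2) - p) with (RtoC (e / 2)) by ring.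
    rewrite Cmod_R, Rabs_pos_eq; lra.
Qed.

Lemma near_ball_open (c : C) (rho : R) (p : C) : near_ball c rho p -> near p (near_ball c rho).
Proof.
  unfold near_ball. intros Hp. exists (rho - Cmod (p - c))%R. split; [lra|].
  intros w Hw. unfold near_ball in Hw.
  assert (T := Cmod_triangle (w - p) (p - c)). replace (w - p + (p - c)) with (w - c) in T by ring. lra.
Qed.

Lemma near_ball_punctured (rho : R) (p : C) :
  near_ball 0 rho p -> near p (fun w => w <> p -> near_ball 0 rho w /\ w <> 0).
Proof.
  intros Hp. destruct (classic (p = 0)) as [E|E].
  - subst p. exists rho. split; [|intros w Hw Hw0; split; assumption].
    exact (Rle_lt_trans _ _ _ (Cmod_ge_0 _) Hp).
  - assert (Hpos : (0 < Cmod p)%R) by (apply Cmod_gt_0, E).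
    destruct (near_ball_open 0 rho p Hp) as [e [He H]].
    exists (Rmin e (Cmod p)). split; [apply Rmin_pos; assumption|].
    intros w Hw _. unfold near_ball in Hw. split.
    + apply H. unfold near_ball. eapply Rlt_le_trans; [exact Hw | apply Rmin_l].
    + intros W0. subst w. replace (0 - p) with (- p) in Hw by ring. rewrite Cmod_opp in Hw.
      assert (Rmin e (Cmod p) <= Cmod p)%R by apply Rmin_r. lra.
Qed.

Lemma near_neq0 (f : C -> C) (p : C) : Ccontinuous_at f p -> f p <> 0 -> near p (fun w => f w <> 0).
Proof.
  intros Hf Hp. apply (near_mono _ _ _ (Hf (Cmod (f p)) ltac:(apply Cmod_gt_0; exact Hp))).
  intros w Hw E. rewrite E in Hw. replace (0 - f p) with (- f p) in Hw by ring.
  rewrite Cmod_opp in Hw. lra.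
Qed.

Lemma Ccontinuous_eq_center (F G : C -> C) (p : C) :
  Ccontinuous_at F p -> Ccontinuous_at G p -> near p (fun w => w <> p -> F w = G w) -> F p = G p.
Proof.
  intros HF HG H. apply NNPP. intro Hne.
  assert (Hn : (0 < Cmod (F p - G p))%R)
    by (apply Cmod_gt_0, Cminus_eq_contra, Hne).
  set (eta := Cmod (F p - G p)) in *.
  destruct (near_punctured_point p _ (near_and _ _ _ H (near_and _ _ _
              (HF (eta / 2)%R ltac:(lra)) (HG (eta / 2)%R ltac:(lra)))))
    as [w [Hwp [Ew [H1 H2]]]].
  specialize (Ew Hwp).
  assert (E : F p - G p = - (F w - F p) + (G w - G p)) by (rewrite Ew; ring).
  assert (T := Cmod_triangle (- (F w - F p)) (G w - G p)). rewrite <- E, Cmod_opp in T.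
  fold eta in T. lra.
Qed.

Lemma germ_holo_center (p : C) (f : C -> C) : germ_holo p f -> Cderivable f p.
Proof. exact (near_center p (fun w => Cderivable f w)). Qed.

Lemma germ_holo_continuous (p : C) (f : C -> C) : germ_holo p f -> Ccontinuous_at f p.
Proof. intros Hf. apply Cderivable_continuous, germ_holo_center, Hf. Qed.

Lemma germ_holo_of_holo_on (rho : R) (f : C -> C) (p : C) :
  holo_on (near_ball 0 rho) f -> near_ball 0 rho p -> germ_holo p f.
Proof. intros Hf Hp. exact (near_mono _ _ _ (near_ball_open 0 rho p Hp) Hf). Qed.

Lemma germ_holo_const (p a : C) : germ_holo p (fun _ => a).
Proof. exists 1%R. split; [lra | intros w _; apply Cderivable_const]. Qed.

Lemma germ_holo_pow_id (p : C) (n : nat) : germ_holo p (fun w => w ^ n).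
Proof. exists 1%R. split; [lra | intros w _; apply Cderivable_pow, Cderivable_id]. Qed.

Lemma germ_holo_opp (p : C) (f : C -> C) : germ_holo p f -> germ_holo p (fun w => - f w).
Proof. intros Hf. exact (near_mono _ _ _ Hf (fun w => Cderivable_opp f w)). Qed.

Lemma germ_holo_plus (p : C) (f g : C -> C) :
  germ_holo p f -> germ_holo p g -> germ_holo p (fun w => f w + g w).
Proof.
  intros Hf Hg. apply (near_mono _ _ _ (near_and _ _ _ Hf Hg)).
  intros w [A B]. apply Cderivable_plus; assumption.
Qed.

Lemma germ_holo_minus (p : C) (f g : C -> C) :
  germ_holo p f -> germ_holo p g -> germ_holo p (fun w => f w - g w).
Proof.
  intros Hf Hg. apply (near_mono _ _ _ (near_and _ _ _ Hf Hg)).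
  intros w [A B]. apply Cderivable_minus; assumption.
Qed.

Lemma germ_holo_mult (p : C) (f g : C -> C) :
  germ_holo p f -> germ_holo p g -> germ_holo p (fun w => f w * g w).
Proof.
  intros Hf Hg. apply (near_mono _ _ _ (near_and _ _ _ Hf Hg)).
  intros w [A B]. apply Cderivable_mult; assumption.
Qed.

Lemma germ_holo_div (p : C) (f g : C -> C) :
  germ_holo p f -> germ_holo p g -> g p <> 0 -> germ_holo p (fun w => f w / g w).
Proof.
  intros Hf Hg Hgp.
  apply (near_mono _ _ _ (near_and _ _ _ (near_and _ _ _ Hf Hg)
                            (near_neq0 g p (germ_holo_continuous p g Hg) Hgp))).
  intros w [[A B] N]. apply Cderivable_div; assumption.
Qed.

Lemma near_eq_fill (p : C) (f g : C -> C) :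
  germ_holo p f -> germ_holo p g -> near p (fun w => w <> p -> f w = g w) -> eq_near p f g.
Proof.
  intros Hf Hg H.
  assert (Hp : f p = g p)
    by (apply Ccontinuous_eq_center; [apply germ_holo_continuous.. | exact H]; assumption).
  apply (near_mono _ _ _ H). intros w Hw.
  destruct (classic (w = p)) as [E|E]; [subst w; exact Hp | exact (Hw E)].
Qed.

Lemma Cmult_integral (a b : C) : a * b = 0 -> a = 0 \/ b = 0.
Proof.
  intros H. destruct (classic (a = 0)) as [Ha|Ha]; [left; exact Ha | right].
  apply NNPP. intros Hb. exact (Cmult_neq_0 a b Ha Hb H).
Qed.

Lemma Csqr_eq_1 (z : C) : z * z = 1 -> z = 1 \/ z = -1.
Proof.
  intros H. assert (E : (z - 1) * (z + 1) = 0)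
    by (replace ((z - 1) * (z + 1)) with (z * z - 1) by ring; rewrite H; ring).
  destruct (Cmult_integral _ _ E) as [E1|E1]; [left | right].
  - replace z with (z - 1 + 1) by ring. rewrite E1. ring.
  - replace z with (z + 1 - 1) by ring. rewrite E1. ring.
Qed.

(** * Continuous square roots of 1 on a punctured disk *)

Lemma continuity_pt_Re_segment (G : C -> C) (w1 w2 : C) (t0 : R) :
  Ccontinuous_at G (w1 + RtoC t0 * (w2 - w1)) ->
  continuity_pt (fun t => Re (G (w1 + RtoC t * (w2 - w1)))) t0.
Proof.
  intros HG eps Heps. destruct (HG eps Heps) as [d [Hd Hd']].
  set (M := (Cmod (w2 - w1) + 1)%R).
  assert (HM : (0 < M)%R) by (unfold M; pose proof (Cmod_ge_0 (w2 - w1)); lra).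
  exists (d / M)%R. split; [apply Rdiv_lt_0_compat; assumption|].
  intros t [_ Ht]. simpl in Ht |- *. unfold R_dist in *.
  assert (Hg : near_ball (w1 + RtoC t0 * (w2 - w1)) d (w1 + RtoC t * (w2 - w1))).
  { unfold near_ball.
    replace (w1 + RtoC t * (w2 - w1) - (w1 + RtoC t0 * (w2 - w1)))
      with (RtoC (t - t0) * (w2 - w1)) by (rewrite RtoC_minus; ring).
    rewrite Cmod_mult, Cmod_R.
    apply Rmult_lt_compat_r with (r := M) in Ht; [|exact HM].
    unfold Rdiv in Ht. rewrite Rmult_assoc, Rinv_l in Ht by lra.
    pose proof (Rabs_pos (t - t0)). unfold M in Ht. nra. }
  specialize (Hd' _ Hg).
  set (a := G (w1 + RtoC t * (w2 - w1))) in *. set (b := G (w1 + RtoC t0 * (w2 - w1))) in *.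
  assert (H := re_le_Cmod (a - b)).
  replace (Re (a - b)) with (Re a - Re b)%R in H by (destruct a, b; simpl; ring).
  lra.
Qed.

Section PuncturedDiskSign.

Variables (F : C -> C) (e : R).
Hypothesis HF : forall w : C, w <> 0 -> (Cmod w < e)%R -> Ccontinuous_at F w /\ F w * F w = 1.

(* [Re F] is continuous along the segment and takes only the values [1] and [-1],
   so by the intermediate value theorem it cannot change sign. *)
Lemma segment_sign_const (w1 w2 : C) :
  (forall t : R, (0 <= t <= 1)%R ->
     w1 + RtoC t * (w2 - w1) <> 0 /\ (Cmod (w1 + RtoC t * (w2 - w1)) < e)%R) ->
  F w1 = F w2.
Proof.
  intros Hseg.
  set (gam := fun t : R => w1 + RtoC t * (w2 - w1)).
  set (h := fun t : R => Re (F (gam t))).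
  assert (Hval : forall t, (0 <= t <= 1)%R -> h t = 1%R \/ h t = (-1)%R).
  { intros t Ht. destruct (Hseg t Ht) as [A B]. unfold h, gam.
    destruct (Csqr_eq_1 _ (proj2 (HF _ A B))) as [E|E]; rewrite E; simpl; lra. }
  assert (Hcont : forall t, (0 <= t <= 1)%R -> continuity_pt h t).
  { intros t Ht. destruct (Hseg t Ht) as [A B]. apply continuity_pt_Re_segment, (HF _ A B). }
  assert (Hh0 : h 0%R = Re (F w1)) by (unfold h, gam; do 3 f_equal; ring).
  assert (Hh1 : h 1%R = Re (F w2)) by (unfold h, gam; do 3 f_equal; ring).
  destruct (Hseg 0%R ltac:(lra)) as [A1 B1]. destruct (Hseg 1%R ltac:(lra)) as [A2 B2].
  unfold gam in *. rewrite Cmult_0_l, Cplus_0_r in A1, B1.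
  replace (w1 + RtoC 1 * (w2 - w1)) with w2 in A2, B2 by ring.
  destruct (Csqr_eq_1 _ (proj2 (HF _ A1 B1))) as [E1|E1];
    destruct (Csqr_eq_1 _ (proj2 (HF _ A2 B2))) as [E2|E2];
    try (rewrite E1, E2; reflexivity); exfalso;
    rewrite E1 in Hh0; rewrite E2 in Hh1; simpl in Hh0, Hh1.
  - destruct (Ranalysis5.IVT_interv (fun t => - h t)%R 0 1) as [t [Ht Ht0]];
      [intros t Ht; apply continuity_pt_opp, Hcont, Ht | lra | lra | lra |].
    destruct (Hval t Ht); lra.
  - destruct (Ranalysis5.IVT_interv h 0 1 Hcont) as [t [Ht Ht0]]; [lra | lra | lra |].
    destruct (Hval t Ht); lra.
Qed.

Lemma segment_in_disk (w1 w2 : C) (t : R) :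
  (Cmod w1 < e)%R -> (Cmod w2 < e)%R -> (0 <= t <= 1)%R -> (Cmod (w1 + RtoC t * (w2 - w1)) < e)%R.
Proof.
  intros H1 H2 Ht.
  replace (w1 + RtoC t * (w2 - w1)) with (RtoC (1 - t) * w1 + RtoC t * w2) by (rewrite RtoC_minus; ring).
  eapply Rle_lt_trans; [apply Cmod_triangle|].
  rewrite !Cmod_mult, !Cmod_R, !Rabs_pos_eq by lra.
  destruct (Req_dec t 1); [subst; nra | nra].
Qed.

(* If the segment from [w1] to [w2] passes through [0], go through [Ci * w1] instead. *)
Lemma punctured_disk_sign_const (w1 w2 : C) :
  w1 <> 0 -> (Cmod w1 < e)%R -> w2 <> 0 -> (Cmod w2 < e)%R -> F w1 = F w2.
Proof.
  intros A1 B1 A2 B2.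
  destruct (classic (forall t : R, (0 <= t <= 1)%R -> w1 + RtoC t * (w2 - w1) <> 0)) as [Hs|Hs].
  { apply segment_sign_const. intros t Ht. split; [apply Hs, Ht | apply segment_in_disk; assumption]. }
  apply not_all_ex_not in Hs. destruct Hs as [t0 Ht0].
  apply imply_to_and in Ht0. destruct Ht0 as [Ht0 E0]. apply NNPP in E0.
  assert (Ht00 : t0 <> 0%R) by (intro E; subst t0; apply A1; rewrite <- E0; ring).
  set (w3 := Ci * w1).
  assert (A3 : w3 <> 0) by (apply Cmult_neq_0; [intro E; injection E; lra | exact A1]).
  assert (B3 : (Cmod w3 < e)%R) by (unfold w3; rewrite Cmod_mult, Cmod_Ci; lra).
  transitivity (F w3); apply segment_sign_const; intros t Ht;
    (split; [intro E | apply segment_in_disk; assumption]).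
  - replace (w1 + RtoC t * (w3 - w1)) with (w1 * (1 - RtoC t + RtoC t * Ci)) in E by (unfold w3; ring).
    destruct (Cmult_integral _ _ E) as [E1|E1]; [exact (A1 E1)|].
    assert (Er := f_equal fst E1). assert (Ei := f_equal snd E1). simpl in Er, Ei. lra.
  - assert (E2 : w1 * (RtoC t0 * Ci * (1 - RtoC t) + RtoC t * (RtoC t0 - 1)) = 0).
    { replace (w1 * (RtoC t0 * Ci * (1 - RtoC t) + RtoC t * (RtoC t0 - 1)))
        with (RtoC t0 * (w3 + RtoC t * (w2 - w3)) - RtoC t * (w1 + RtoC t0 * (w2 - w1)))
        by (unfold w3; ring).
      rewrite E, E0. ring. }
    destruct (Cmult_integral _ _ E2) as [E1|E1]; [exact (A1 E1)|].
    assert (Er := f_equal fst E1). assert (Ei := f_equal snd E1). simpl in Er, Ei.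
    assert (t = 1%R) by nra. subst t. assert (t0 = 1%R) by nra. subst t0.
    apply A2. rewrite <- E0. ring.
Qed.

End PuncturedDiskSign.

(** * Holomorphic square roots *)

(* The principal branch, with values in the closed right half-plane. *)
Definition Csqrt (z : C) : C :=
  (sqrt ((Cmod z + Re z) / 2),
   if Rle_dec 0 (Im z) then sqrt ((Cmod z - Re z) / 2) else (- sqrt ((Cmod z - Re z) / 2))%R).

Lemma Cmod_sqr_Re_Im (z : C) : (Cmod z * Cmod z = Re z * Re z + Im z * Im z)%R.
Proof. destruct z as [x y]. unfold Cmod. simpl. rewrite sqrt_sqrt; [ring | nra]. Qed.

Lemma Csqrt_sqr (z : C) : Csqrt z * Csqrt z = z.
Proof.
  assert (Hm := Cmod_sqr_Re_Im z). assert (Hm0 := Cmod_ge_0 z).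
  destruct z as [x y]. unfold Csqrt. simpl in *.
  set (m := Cmod (x, y)) in *.
  assert (H1 : (0 <= (m + x) / 2)%R) by nra.
  assert (H2 : (0 <= (m - x) / 2)%R) by nra.
  assert (HA := sqrt_sqrt _ H1). assert (HB := sqrt_sqrt _ H2).
  assert (HAB : (sqrt ((m + x) / 2) * sqrt ((m - x) / 2) = Rabs y / 2)%R).
  { rewrite <- sqrt_mult by lra.
    replace ((m + x) / 2 * ((m - x) / 2))%R with ((Rabs y / 2) * (Rabs y / 2))%R.
    - apply sqrt_square. assert (0 <= Rabs y)%R by apply Rabs_pos. lra.
    - replace ((Rabs y / 2) * (Rabs y / 2))%R with (Rabs y * Rabs y / 4)%R by field.
      rewrite <- Rabs_mult, Rabs_pos_eq by nra. nra. }
  unfold Cmult. simpl.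
  destruct (Rle_dec 0 y) as [Hy|Hy].
  - rewrite Rabs_pos_eq in HAB by lra. f_equal; nra.
  - rewrite Rabs_left in HAB by lra. f_equal; nra.
Qed.

Lemma Re_le_Cmod (c : C) : (Re c <= Cmod c)%R.
Proof. assert (H := re_le_Cmod c). assert (Re c <= Rabs (Re c))%R by apply Rle_abs. lra. Qed.

Lemma Csqrt_Re_ge0 (z : C) : (0 <= Re (Csqrt z))%R.
Proof. apply sqrt_pos. Qed.

Lemma Csqrt_Re_gt0 (z : C) : (0 < Re z)%R -> (0 < Re (Csqrt z))%R.
Proof. intros H. apply sqrt_lt_R0. assert (Re z <= Cmod z)%R by apply Re_le_Cmod. lra. Qed.

(* Since [s^2 - q^2 = y - z0] for [s = Csqrt y], [q = Csqrt z0], and [Re (s + q) >= Re q > 0],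
   the remainder [-(s - q)^2 / (2 q)] is at most [|y - z0|^2 / (2 (Re q)^3)]. *)
Lemma is_Cderive_Csqrt (z0 : C) : (0 < Re z0)%R -> is_Cderive Csqrt z0 (/ (2 * Csqrt z0)).
Proof.
  intros Hz0. apply is_Cderive_eps. intros eps Heps.
  set (q := Csqrt z0).
  assert (HR : (0 < Re q)%R) by (apply Csqrt_Re_gt0; exact Hz0).
  set (R0 := Re q) in *.
  assert (Hq : q <> 0) by (intro E; unfold R0 in HR; rewrite E in HR; simpl in HR; lra).
  assert (HqR : (R0 <= Cmod q)%R) by apply Re_le_Cmod.
  exists (eps * 2 * (R0 * R0 * R0))%R. split; [repeat apply Rmult_lt_0_compat; lra|].
  intros y Hy. unfold near_ball in Hy.
  set (s := Csqrt y).
  assert (HP : (R0 <= Cmod (s + q))%R).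
  { assert (H := Re_le_Cmod (s + q)). assert (H0 := Csqrt_Re_ge0 y).
    change (Re (s + q)) with (Re s + Re q)%R in H. fold s in H0. unfold R0. lra. }
  assert (Hsq : s + q <> 0) by (intro E; rewrite E, Cmod_0 in HP; lra).
  assert (Eyz : y - z0 = (s - q) * (s + q)).
  { unfold s, q. rewrite <- (Csqrt_sqr y) at 1. rewrite <- (Csqrt_sqr z0) at 1. ring. }
  assert (H2q : 2 * q <> 0) by (apply Cmult_neq_0; [intro E; injection E; lra | exact Hq]).
  replace (s - q - (y - z0) * / (2 * q)) with (- ((y - z0) / (s + q)) * ((y - z0) / (s + q)) / (2 * q))
    by (rewrite Eyz; field; auto).
  rewrite Cmod_div, Cmod_mult, Cmod_opp, Cmod_mult, !Cmod_div by auto.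
  replace (Cmod 2) with 2%R by (rewrite Cmod_R, Rabs_pos_eq; lra).
  set (t := Cmod (y - z0)) in *. set (P := Cmod (s + q)) in *. set (Q := Cmod q) in *.
  assert (Ht : (0 <= t)%R) by apply Cmod_ge_0.
  assert (HtP : (0 <= t / P <= t / R0)%R).
  { split; [apply Rdiv_le_0_compat; lra|].
    apply Rmult_le_compat_l; [lra | apply Rinv_le_contravar; lra]. }
  apply Rle_div_l; [lra|].
  assert (E : (t / R0 * (t / R0) * (R0 * R0) = t * t)%R) by (field; lra).
  assert (t / R0 * (t / R0) <= eps * t * 2 * R0)%R.
  { apply (Rmult_le_reg_r (R0 * R0)); nra. }
  assert (t / P * (t / P) <= t / R0 * (t / R0))%R by nra.
  assert (eps * t * 2 * R0 <= eps * t * (2 * Q))%R by nra.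
  lra.
Qed.

(* Near [p], [g / g p] stays in the half-plane [0 < Re z], where [Csqrt] is holomorphic. *)
Lemma germ_holo_sqrt (p : C) (g : C -> C) :
  germ_holo p g -> g p <> 0 -> exists s, germ_holo p s /\ s p <> 0 /\ near p (fun w => s w * s w = g w).
Proof.
  intros Hg Hgp.
  assert (Hm : (0 < Cmod (g p))%R) by (apply Cmod_gt_0, Hgp).
  set (G := fun w => g w / g p).
  assert (HG : near p (fun w => 0 < Re (G w))%R).
  { apply (near_mono _ _ _ (germ_holo_continuous p g Hg (Cmod (g p) / 2)%R ltac:(lra))).
    intros w Hw.
    assert (H1 : (Cmod (G w - 1) < 1 / 2)%R).
    { replace (G w - 1) with ((g w - g p) / g p) by (unfold G; field; exact Hgp).
      rewrite Cmod_div by exact Hgp. apply Rlt_div_l; lra. }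
    assert (H2 := re_le_Cmod (G w - 1)).
    replace (Re (G w - 1)) with (Re (G w) - 1)%R in H2 by (simpl; ring).
    apply Rabs_le_between in H2. lra. }
  set (s := fun w => Csqrt (g p) * Csqrt (G w)).
  assert (Hss : forall w, s w * s w = g w).
  { intros w. unfold s.
    replace (Csqrt (g p) * Csqrt (G w) * (Csqrt (g p) * Csqrt (G w)))
      with ((Csqrt (g p) * Csqrt (g p)) * (Csqrt (G w) * Csqrt (G w))) by ring.
    rewrite !Csqrt_sqr. unfold G. field. exact Hgp. }
  exists s. split; [|split].
  - apply (near_mono _ _ _ (near_and _ _ _ Hg HG)). intros w [Hw HGw].
    apply Cderivable_mult; [apply Cderivable_const|].
    apply (Cderivable_comp Csqrt G w); [eexists; apply is_Cderive_Csqrt, HGw|].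
    apply Cderivable_div; [exact Hw | apply Cderivable_const | exact Hgp].
  - intros E. apply Hgp. rewrite <- Hss, E. ring.
  - exists 1%R. split; [lra | intros w _; apply Hss].
Qed.

(** * Vanishing order of a square *)

Lemma Cpow_cancel (w : C) (n : nat) (x y : C) : w <> 0 -> w ^ n * x = w ^ n * y -> x = y.
Proof.
  intros Hw E. assert (Hn := Cpow_nz w n Hw).
  replace x with (/ w ^ n * (w ^ n * x)) by (field; exact Hn).
  rewrite E. field. exact Hn.
Qed.

Lemma Cpow_opp_odd (x : C) (k : nat) : (- x) ^ (2 * k + 1) = - x ^ (2 * k + 1).
Proof.
  induction k as [|k IH]; [simpl; ring|].
  replace (2 * S k + 1)%nat with (S (S (2 * k + 1))) by lia.
  rewrite !Cpow_S, IH. ring.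
Qed.

Lemma punctured_disk_point (e : R) : (0 < e)%R -> exists w : C, w <> 0 /\ (Cmod w < e)%R.
Proof.
  intros He. apply (near_punctured_point 0 (fun w => Cmod w < e)%R).
  exists e. split; [exact He | intros w Hw; apply near_ball_0, Hw].
Qed.

Section SquareVanishingOrder.

Variables (h s : C -> C) (m : nat).
Hypotheses (Hh : germ_holo 0 h) (Hs : germ_holo 0 s) (Hs0 : s 0 <> 0)
  (Hsq : near 0 (fun w => h w * h w = w ^ m * (s w * s w))).

Let square_disk : exists e, (0 < e)%R /\ forall w, (Cmod w < e)%R ->
  Cderivable h w /\ Cderivable s w /\ s w <> 0 /\ h w * h w = w ^ m * (s w * s w).
Proof.
  destruct (near_and _ _ _ (near_and _ _ _ Hh Hs)
              (near_and _ _ _ (near_neq0 s 0 (germ_holo_continuous 0 s Hs) Hs0) Hsq))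
    as [e [He H]].
  exists e. split; [exact He|]. intros w Hw.
  destruct (H w (proj2 (near_ball_0 e w) Hw)) as [[A B] [N E]]. tauto.
Qed.

(* For odd [m], [w |-> h (w^2) / (w^m s (w^2))] would be an odd function with values [1] or [-1]
   on a punctured disk, contradicting its constancy. *)
Lemma square_pow_even : Nat.Even m.
Proof.
  destruct (Nat.Even_or_Odd m) as [Hm|[k Hk]]; [exact Hm|exfalso].
  destruct square_disk as [e [He H]].
  set (del := Rmin 1 e).
  assert (Hdel : (0 < del)%R) by (apply Rmin_pos; lra).
  set (F := fun w => h (w * w) / (w ^ m * s (w * w))).
  assert (HF : forall w : C, w <> 0 -> (Cmod w < del)%R -> Ccontinuous_at F w /\ F w * F w = 1).
  { intros w Hw Hwd.
    assert (Hw1 : (Cmod w < 1)%R) by (eapply Rlt_le_trans; [exact Hwd | apply Rmin_l]).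
    assert (Hwe : (Cmod w < e)%R) by (eapply Rlt_le_trans; [exact Hwd | apply Rmin_r]).
    assert (Hww : w * w <> 0) by (apply Cmult_neq_0; exact Hw).
    assert (Hwwe : (Cmod (w * w) < e)%R) by (rewrite Cmod_mult; pose proof (Cmod_ge_0 w); nra).
    destruct (H _ Hwwe) as [Dh [Ds [Ns Eh]]].
    assert (Hpm := Cpow_nz w m Hw).
    split.
    - apply Cderivable_continuous. unfold F.
      assert (Dsq : Cderivable (fun y => y * y) w) by (apply Cderivable_mult; apply Cderivable_id).
      apply Cderivable_div; [apply (Cderivable_comp h (fun y => y * y)); assumption | |].
      + apply Cderivable_mult; [apply Cderivable_pow, Cderivable_id|].
        apply (Cderivable_comp s (fun y => y * y)); assumption.
      + apply Cmult_neq_0; assumption.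
    - unfold F.
      replace (h (w * w) / (w ^ m * s (w * w)) * (h (w * w) / (w ^ m * s (w * w))))
        with (h (w * w) * h (w * w) / ((w ^ m * w ^ m) * (s (w * w) * s (w * w)))) by (field; tauto).
      rewrite Eh, <- Cpow_mult_l. field. split; [exact Ns | apply Cpow_nz, Hww]. }
  destruct (punctured_disk_point del Hdel) as [w0 [Hw0 Hw0d]].
  assert (Hw0' : - w0 <> 0) by (intro E0; apply Hw0; replace w0 with (- - w0) by ring; rewrite E0; ring).
  assert (Hw0d' : (Cmod (- w0) < del)%R) by (rewrite Cmod_opp; exact Hw0d).
  assert (Eodd : F (- w0) = - F w0).
  { unfold F. replace (- w0 * - w0) with (w0 * w0) by ring.
    rewrite Hk, Cpow_opp_odd. field. split; [|apply Cpow_nz, Hw0].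
    apply H. rewrite Cmod_mult.
    assert (del <= 1 /\ del <= e)%R by (split; [apply Rmin_l | apply Rmin_r]).
    pose proof (Cmod_ge_0 w0). nra. }
  assert (Eeven := punctured_disk_sign_const F del HF w0 (- w0) Hw0 Hw0d Hw0' Hw0d').
  destruct (HF w0 Hw0 Hw0d) as [_ H1].
  assert (E : F w0 * F (- w0) = 1) by (rewrite <- Eeven; exact H1).
  rewrite Eodd in E. replace (F w0 * - F w0) with (- (F w0 * F w0)) in E by ring.
  rewrite H1 in E. apply (f_equal Re) in E. simpl in E. lra.
Qed.

Lemma square_pow_half (k : nat) :
  m = (k + k)%nat -> exists eps, eps * eps = 1 /\ near 0 (fun w => h w = eps * (w ^ k * s w)).
Proof.
  intros Hk. destruct square_disk as [e [He H]].
  set (F := fun w => h w / (w ^ k * s w)).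
  assert (HF : forall w : C, w <> 0 -> (Cmod w < e)%R -> Ccontinuous_at F w /\ F w * F w = 1).
  { intros w Hw Hwe. destruct (H w Hwe) as [Dh [Ds [Ns Eh]]].
    assert (Hpk := Cpow_nz w k Hw).
    split.
    - apply Cderivable_continuous, Cderivable_div; [exact Dh | | apply Cmult_neq_0; assumption].
      apply Cderivable_mult; [apply Cderivable_pow, Cderivable_id | exact Ds].
    - unfold F.
      replace (h w / (w ^ k * s w) * (h w / (w ^ k * s w)))
        with (h w * h w / ((w ^ k * w ^ k) * (s w * s w))) by (field; tauto).
      rewrite Eh, Hk, Cpow_add_r. field. tauto. }
  destruct (punctured_disk_point e He) as [w0 [Hw0 Hw0e]].
  exists (F w0). split; [exact (proj2 (HF w0 Hw0 Hw0e))|].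
  apply (near_eq_fill 0 h (fun w => F w0 * (w ^ k * s w))); [exact Hh | |].
  - apply germ_holo_mult; [apply germ_holo_const | apply germ_holo_mult; [apply germ_holo_pow_id | exact Hs]].
  - exists e. split; [exact He|]. intros w Hw Hw0'. apply (proj1 (near_ball_0 e w)) in Hw.
    rewrite <- (punctured_disk_sign_const F e HF w w0 Hw0' Hw Hw0 Hw0e).
    destruct (H w Hw) as [_ [_ [Ns _]]]. unfold F. field. split; [exact Ns | apply Cpow_nz, Hw0'].
Qed.

End SquareVanishingOrder.

(** * Exactness on stalks *)

Lemma germ_colinear (p : C) (p1 q1 X Y : C -> C) :
  germ_holo p p1 -> germ_holo p q1 -> germ_holo p X -> germ_holo p Y -> ~ (p1 p = 0 /\ q1 p = 0) ->
  near p (fun w => p1 w * Y w - q1 w * X w = 0) ->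
  exists s, germ_holo p s /\ near p (fun w => X w = s w * p1 w /\ Y w = s w * q1 w).
Proof.
  intros Hp1 Hq1 HX HY Hv E.
  destruct (classic (p1 p = 0)) as [Z|Z].
  - assert (Zq : q1 p <> 0) by tauto.
    exists (fun w => Y w / q1 w). split; [apply germ_holo_div; assumption|].
    apply (near_mono _ _ _ (near_and _ _ _ E (near_neq0 q1 p (germ_holo_continuous p q1 Hq1) Zq))).
    intros w [E1 N]. split; [|field; exact N].
    replace (X w) with (q1 w * X w / q1 w) by (field; exact N).
    replace (q1 w * X w) with (p1 w * Y w - (p1 w * Y w - q1 w * X w)) by ring.
    rewrite E1. field. exact N.
  - exists (fun w => X w / p1 w). split; [apply germ_holo_div; assumption|].
    apply (near_mono _ _ _ (near_and _ _ _ E (near_neq0 p1 p (germ_holo_continuous p p1 Hp1) Z))).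
    intros w [E1 N]. split; [field; exact N|].
    replace (Y w) with (p1 w * Y w / p1 w) by (field; exact N).
    replace (p1 w * Y w) with ((p1 w * Y w - q1 w * X w) + q1 w * X w) by ring.
    rewrite E1. field. exact N.
Qed.

Section StalkExactness.

Variables (p : C) (k : nat) (p1 q1 p2 q2 u : C -> C).
Hypotheses (Hp1 : germ_holo p p1) (Hq1 : germ_holo p q1) (Hp2 : germ_holo p p2) (Hq2 : germ_holo p q2)
  (Hv1 : ~ (p1 p = 0 /\ q1 p = 0)).

(* [(s, t) |-> s v1 + t v2] is inverted by Cramer's rule off [p]. *)
Lemma stalk_injective :
  near p (fun w => w <> p -> p1 w * q2 w - q1 w * p2 w <> 0) ->
  forall s t, germ_holo p s -> germ_holo p t ->
    eq_near p (fun w => s w * p1 w + t w * p2 w) (fun _ => 0) ->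
    eq_near p (fun w => s w * q1 w + t w * q2 w) (fun _ => 0) ->
    eq_near p s (fun _ => 0) /\ eq_near p t (fun _ => 0).
Proof.
  intros Hdet s t Hs Ht E1 E2.
  assert (E := near_and _ _ _ (near_and _ _ _ E1 E2) Hdet).
  split; (apply near_eq_fill; [assumption | apply germ_holo_const |]);
    apply (near_mono _ _ _ E); intros w [[F1 F2] F3] Hw; specialize (F3 Hw).
  - assert (Z : s w * (p1 w * q2 w - q1 w * p2 w) = 0).
    { replace (s w * (p1 w * q2 w - q1 w * p2 w))
        with (q2 w * (s w * p1 w + t w * p2 w) - p2 w * (s w * q1 w + t w * q2 w)) by ring.
      rewrite F1, F2. ring. }
    destruct (Cmult_integral _ _ Z); tauto.
  - assert (Z : t w * (p1 w * q2 w - q1 w * p2 w) = 0).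
    { replace (t w * (p1 w * q2 w - q1 w * p2 w))
        with (p1 w * (s w * q1 w + t w * q2 w) - q1 w * (s w * p1 w + t w * p2 w)) by ring.
      rewrite F1, F2. ring. }
    destruct (Cmult_integral _ _ Z); tauto.
Qed.

(* [det (v1, (x, y)) = det (v1, v2) * t] on the image, and [det (v1, v2) = w^k u] with [u] a unit. *)
Lemma stalk_kernel :
  germ_holo p u -> u p <> 0 -> near p (fun w => p1 w * q2 w - q1 w * p2 w = w ^ k * u w) ->
  forall x y, germ_holo p x -> germ_holo p y ->
    (in_ideal_pow p k (fun w => - q1 w * x w + p1 w * y w) <->
     exists s t, germ_holo p s /\ germ_holo p t /\
       eq_near p x (fun w => s w * p1 w + t w * p2 w) /\
       eq_near p y (fun w => s w * q1 w + t w * q2 w)).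
Proof.
  intros Hu Hu0 Hdet x y Hx Hy. split.
  - intros [G [HG HE]].
    set (t := fun w => G w / u w).
    assert (Ht : germ_holo p t) by (apply germ_holo_div; assumption).
    destruct (germ_colinear p p1 q1 (fun w => x w - t w * p2 w) (fun w => y w - t w * q2 w))
      as [s [Hs Es]]; try assumption.
    + apply germ_holo_minus, germ_holo_mult; assumption.
    + apply germ_holo_minus, germ_holo_mult; assumption.
    + apply (near_mono _ _ _ (near_and _ _ _ (near_and _ _ _ HE Hdet)
                                (near_neq0 u p (germ_holo_continuous p u Hu) Hu0))).
      intros w [[F1 F2] N]. unfold t.
      replace (p1 w * (y w - G w / u w * q2 w) - q1 w * (x w - G w / u w * p2 w))
        with ((- q1 w * x w + p1 w * y w) - G w / u w * (p1 w * q2 w - q1 w * p2 w)) by (field; exact N).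
      rewrite F1, F2. field. exact N.
    + exists s, t. split; [exact Hs|]. split; [exact Ht|].
      split; apply (near_mono _ _ _ Es); intros w [F1 F2];
        [rewrite <- F1 | rewrite <- F2]; ring.
  - intros [s [t [Hs [Ht [E1 E2]]]]].
    exists (fun w => t w * u w). split; [apply germ_holo_mult; assumption|].
    apply (near_mono _ _ _ (near_and _ _ _ (near_and _ _ _ E1 E2) Hdet)).
    intros w [[F1 F2] F3]. rewrite F1, F2.
    replace (- q1 w * (s w * p1 w + t w * p2 w) + p1 w * (s w * q1 w + t w * q2 w))
      with (t w * (p1 w * q2 w - q1 w * p2 w)) by ring.
    rewrite F3. ring.
Qed.

Lemma stalk_surjective :
  forall g, germ_holo p g ->
    exists x y, germ_holo p x /\ germ_holo p y /\
      in_ideal_pow p k (fun w => - q1 w * x w + p1 w * y w - g w).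
Proof.
  intros g Hg.
  destruct (classic (p1 p = 0)) as [Z|Z].
  - assert (Zq : q1 p <> 0) by tauto.
    exists (fun w => - g w / q1 w), (fun _ => 0).
    split; [apply germ_holo_div; [apply germ_holo_opp | |]; assumption|].
    split; [apply germ_holo_const|].
    exists (fun _ => 0). split; [apply germ_holo_const|].
    apply (near_mono _ _ _ (near_neq0 q1 p (germ_holo_continuous p q1 Hq1) Zq)).
    intros w N. field. exact N.
  - exists (fun _ => 0), (fun w => g w / p1 w).
    split; [apply germ_holo_const|]. split; [apply germ_holo_div; assumption|].
    exists (fun _ => 0). split; [apply germ_holo_const|].
    apply (near_mono _ _ _ (near_neq0 p1 p (germ_holo_continuous p p1 Hp1) Z)).
    intros w N. field. exact N.
Qed.

Lemma stalk_exact_of_det :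
  germ_holo p u -> u p <> 0 -> near p (fun w => p1 w * q2 w - q1 w * p2 w = w ^ k * u w) ->
  near p (fun w => w <> p -> p1 w * q2 w - q1 w * p2 w <> 0) ->
  stalk_exact p k p1 q1 p2 q2 (fun w => - q1 w) (fun w => p1 w).
Proof.
  intros Hu Hu0 Hdet Hpunct.
  split; [exact (stalk_injective Hpunct) | split; [exact (stalk_kernel Hu Hu0 Hdet) | exact stalk_surjective]].
Qed.

End StalkExactness.

(** * Vanishing orders of [beta] and of [det (v1, v2)] *)

Lemma pow_cancel_center (n : nat) (A B : C -> C) :
  germ_holo 0 A -> germ_holo 0 B -> near 0 (fun w => w ^ n * A w = w ^ n * B w) -> A 0 = B 0.
Proof.
  intros HA HB E. apply (near_center 0 (fun w => A w = B w)).
  apply near_eq_fill; [exact HA | exact HB |].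
  apply (near_mono _ _ _ E). intros w Ew Hw. exact (Cpow_cancel w n _ _ Hw Ew).
Qed.

Lemma vorder0_le (g h : C -> C) (r n : nat) :
  germ_holo 0 g -> g 0 <> 0 -> germ_holo 0 h -> near 0 (fun w => w ^ r * g w = w ^ n * h w) ->
  (n <= r)%nat.
Proof.
  intros Hg Hg0 Hh E. destruct (Compare_dec.le_lt_dec n r) as [L|L]; [exact L | exfalso].
  apply Hg0. rewrite (pow_cancel_center r g (fun w => w ^ (n - r) * h w)); [| exact Hg | |].
  - replace (n - r)%nat with (S (n - r - 1)) by lia. simpl. ring.
  - apply germ_holo_mult; [apply germ_holo_pow_id | exact Hh].
  - apply (near_mono _ _ _ E). intros w Ew. rewrite Ew, Cmult_assoc, <- Cpow_add_r.
    do 3 f_equal. lia.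
Qed.

Lemma sec_vorder0_discr_le (a b c : C -> C) (r z : nat) :
  vorder0 (discr a b c) r -> sec_vorder0 a b c z -> (2 * z <= r)%nat.
Proof.
  intros [e1 [He1 [g [Hg [Hg0 Er]]]]] [e2 [He2 [a' [b' [c' [Ha' [Hb' [Hc' [_ Ez]]]]]]]]].
  assert (Ga' : germ_holo 0 a') by (exists e2; split; assumption).
  assert (Gb' : germ_holo 0 b') by (exists e2; split; assumption).
  assert (Gc' : germ_holo 0 c') by (exists e2; split; assumption).
  apply (vorder0_le g (fun w => b' w * b' w - 4 * a' w * c' w)).
  - exists e1. split; assumption.
  - exact Hg0.
  - apply germ_holo_minus; [apply germ_holo_mult; assumption|].
    apply germ_holo_mult; [apply germ_holo_mult; [apply germ_holo_const|] | ]; assumption.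
  - apply (near_mono _ _ _ (near_and _ _ _ (ex_intro _ e1 (conj He1 Er)) (ex_intro _ e2 (conj He2 Ez)))).
    intros w [E1 [Ea [Eb Ec]]]. rewrite <- E1. unfold discr. rewrite Ea, Eb, Ec.
    replace (2 * z)%nat with (z + z)%nat by lia. rewrite Cpow_add_r. ring.
Qed.

Lemma pow_factor_of_mult (f P A : C -> C) (z : nat) :
  germ_holo 0 P -> germ_holo 0 A -> P 0 <> 0 -> near 0 (fun w => f w * P w = w ^ z * A w) ->
  exists f', germ_holo 0 f' /\ near 0 (fun w => f w = w ^ z * f' w).
Proof.
  intros HP HA HP0 E. exists (fun w => A w / P w). split; [apply germ_holo_div; assumption|].
  apply (near_mono _ _ _ (near_and _ _ _ E (near_neq0 P 0 (germ_holo_continuous 0 P HP) HP0))).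
  intros w [Ew N]. replace (f w) with (f w * P w / P w) by (field; exact N). rewrite Ew. field. exact N.
Qed.

Lemma sec_vorder0_scalar_factor (a b c f P1 P2 P3 : C -> C) (z : nat) :
  germ_holo 0 f -> germ_holo 0 P1 -> germ_holo 0 P2 -> germ_holo 0 P3 ->
  ~ (P1 0 = 0 /\ P2 0 = 0 /\ P3 0 = 0) ->
  near 0 (fun w => a w = f w * P1 w /\ b w = f w * P2 w /\ c w = f w * P3 w) ->
  sec_vorder0 a b c z ->
  exists f', germ_holo 0 f' /\ f' 0 <> 0 /\ near 0 (fun w => f w = w ^ z * f' w).
Proof.
  intros Hf HP1 HP2 HP3 HP Hfac [e [He [a' [b' [c' [Ha' [Hb' [Hc' [Hn Ez]]]]]]]]].
  assert (Ga' : germ_holo 0 a') by (exists e; split; assumption).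
  assert (Gb' : germ_holo 0 b') by (exists e; split; assumption).
  assert (Gc' : germ_holo 0 c') by (exists e; split; assumption).
  assert (E : near 0 (fun w => f w * P1 w = w ^ z * a' w /\ f w * P2 w = w ^ z * b' w /\
                               f w * P3 w = w ^ z * c' w)).
  { apply (near_mono _ _ _ (near_and _ _ _ Hfac (ex_intro _ e (conj He Ez)))).
    intros w [[A1 [A2 A3]] [B1 [B2 B3]]]. repeat split; congruence. }
  assert (Hf' : exists f', germ_holo 0 f' /\ near 0 (fun w => f w = w ^ z * f' w)).
  { destruct (classic (P1 0 = 0)); [destruct (classic (P2 0 = 0))|].
    - apply (pow_factor_of_mult f P3 c'); try assumption; [tauto | apply (near_mono _ _ _ E); tauto].
    - apply (pow_factor_of_mult f P2 b'); try assumption. apply (near_mono _ _ _ E); tauto.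
    - apply (pow_factor_of_mult f P1 a'); try assumption. apply (near_mono _ _ _ E); tauto. }
  destruct Hf' as [f' [Hf' Ef']].
  exists f'. split; [exact Hf' | split; [|exact Ef']].
  intros Hf0. apply Hn.
  assert (Hzero : forall Pi Ai, germ_holo 0 Pi -> germ_holo 0 Ai ->
                    near 0 (fun w => f w * Pi w = w ^ z * Ai w) -> Ai 0 = 0).
  { intros Pi Ai HPi HAi Ei.
    rewrite (pow_cancel_center z Ai (fun w => f' w * Pi w)); [rewrite Hf0; ring | exact HAi | |].
    - apply germ_holo_mult; assumption.
    - apply (near_mono _ _ _ (near_and _ _ _ Ef' Ei)). intros w [E1 E2]. rewrite <- E2, E1. ring. }
  repeat split; (eapply Hzero; [| | apply (near_mono _ _ _ E); intros w Ew; apply Ew]); eassumption.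
Qed.

Lemma sym_mult_neq0 (p1 q1 p2 q2 : C) : ~ (p1 = 0 /\ q1 = 0) -> ~ (p2 = 0 /\ q2 = 0) ->
  ~ (p1 * p2 = 0 /\ p1 * q2 + q1 * p2 = 0 /\ q1 * q2 = 0).
Proof.
  intros H1 H2 [A [B Cq]].
  destruct (Cmult_integral _ _ A) as [E|E]; subst.
  - assert (q1 <> 0) by tauto.
    destruct (Cmult_integral _ _ Cq) as [E2|E2]; [tauto | subst].
    apply (Cmult_neq_0 q1 p2); [assumption | tauto | rewrite <- B; ring].
  - assert (q2 <> 0) by tauto.
    destruct (Cmult_integral _ _ Cq) as [E2|E2]; [subst | tauto].
    apply (Cmult_neq_0 p1 q2); [tauto | assumption | rewrite <- B; ring].
Qed.

Lemma det_vorder0 (f' d g : C -> C) (r z : nat) :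
  germ_holo 0 f' -> germ_holo 0 d -> germ_holo 0 g -> f' 0 <> 0 -> g 0 <> 0 -> (2 * z <= r)%nat ->
  near 0 (fun w => (w ^ z * f' w * d w) * (w ^ z * f' w * d w) = w ^ r * g w) ->
  exists u, germ_holo 0 u /\ u 0 <> 0 /\ near 0 (fun w => d w = w ^ (Nat.div r 2 - z) * u w).
Proof.
  intros Hf' Hd Hg Hf'0 Hg0 Hle E.
  set (h := fun w => f' w * d w).
  assert (Gh : germ_holo 0 h) by (apply germ_holo_mult; assumption).
  destruct (germ_holo_sqrt 0 g Hg Hg0) as [s [Hs [Hs0 Es]]].
  assert (Hsq : near 0 (fun w => h w * h w = w ^ (r - 2 * z) * (s w * s w))).
  { apply (near_eq_fill 0 (fun w => h w * h w) (fun w => w ^ (r - 2 * z) * (s w * s w))).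
    - apply germ_holo_mult; exact Gh.
    - apply germ_holo_mult; [apply germ_holo_pow_id | apply germ_holo_mult; exact Hs].
    - apply (near_mono _ _ _ (near_and _ _ _ E Es)). intros w [Ew Esw] Hw.
      apply (Cpow_cancel w (z + z)); [exact Hw|].
      replace (w ^ (z + z) * (w ^ (r - 2 * z) * (s w * s w))) with (w ^ r * g w)
        by (rewrite Esw, Cmult_assoc, <- Cpow_add_r; do 3 f_equal; lia).
      rewrite <- Ew, Cpow_add_r. unfold h. ring. }
  destruct (square_pow_even h s (r - 2 * z) Gh Hs Hs0 Hsq) as [k Hk].
  destruct (square_pow_half h s (r - 2 * z) Gh Hs Hs0 Hsq k ltac:(lia)) as [eps [Heps Eh]].
  replace (Nat.div r 2 - z)%nat with k
    by (replace r with ((z + k) * 2)%nat by lia; rewrite Nat.div_mul by lia; lia).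
  assert (Heps0 : eps <> 0) by (intros E0; apply C1_nz; rewrite <- Heps, E0; ring).
  exists (fun w => eps * s w / f' w). split; [|split].
  - apply germ_holo_div; [apply germ_holo_mult; [apply germ_holo_const|] | |]; assumption.
  - apply Cmult_neq_0; [apply Cmult_neq_0; assumption|].
    intros E0. apply C1_nz. rewrite <- (Cinv_r (f' 0) Hf'0), E0. ring.
  - apply (near_mono _ _ _ (near_and _ _ _ Eh (near_neq0 f' 0 (germ_holo_continuous 0 f' Hf') Hf'0))).
    intros w [Ew N]. unfold h in Ew.
    replace (d w) with (f' w * d w / f' w) by (field; exact N). rewrite Ew. field. exact N.
Qed.

Lemma det_factor_at_0 (a b c f p1 q1 p2 q2 : C -> C) (r z : nat) :
  germ_holo 0 f -> germ_holo 0 p1 -> germ_holo 0 q1 -> germ_holo 0 p2 -> germ_holo 0 q2 ->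
  ~ (p1 0 = 0 /\ q1 0 = 0) -> ~ (p2 0 = 0 /\ q2 0 = 0) ->
  near 0 (fun w => a w = f w * (p1 w * p2 w) /\ b w = f w * (p1 w * q2 w + q1 w * p2 w) /\
                   c w = f w * (q1 w * q2 w)) ->
  vorder0 (discr a b c) r -> sec_vorder0 a b c z ->
  exists u, germ_holo 0 u /\ u 0 <> 0 /\
    near 0 (fun w => p1 w * q2 w - q1 w * p2 w = w ^ (Nat.div r 2 - z) * u w).
Proof.
  intros Hf Hp1 Hq1 Hp2 Hq2 Hv1 Hv2 Hfac Hr Hz.
  destruct (sec_vorder0_scalar_factor a b c f (fun w => p1 w * p2 w)
              (fun w => p1 w * q2 w + q1 w * p2 w) (fun w => q1 w * q2 w) z)
    as [f' [Hf' [Hf'0 Ef]]];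
    [exact Hf | apply germ_holo_mult; assumption | apply germ_holo_plus; apply germ_holo_mult; assumption
     | apply germ_holo_mult; assumption | exact (sym_mult_neq0 _ _ _ _ Hv1 Hv2) | exact Hfac | exact Hz |].
  assert (Hle := sec_vorder0_discr_le a b c r z Hr Hz).
  destruct Hr as [e [He [g [Hg [Hg0 Eg]]]]].
  apply (det_vorder0 f' (fun w => p1 w * q2 w - q1 w * p2 w) g r z); try assumption.
  - apply germ_holo_minus; apply germ_holo_mult; assumption.
  - exists e. split; assumption.
  - apply (near_mono _ _ _ (near_and _ _ _ (near_and _ _ _ Hfac Ef) (ex_intro _ e (conj He Eg)))).
    intros w [[[Ea [Eb Ec]] Efw] Egw]. rewrite <- Egw. unfold discr. rewrite Ea, Eb, Ec, Efw. ring.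
Qed.

Lemma pow_factor_away_from_0 (p : C) (k : nat) (d : C -> C) :
  p <> 0 -> germ_holo p d -> d p <> 0 ->
  exists u, germ_holo p u /\ u p <> 0 /\ near p (fun w => d w = w ^ k * u w).
Proof.
  intros Hp Hd Hdp. exists (fun w => d w / w ^ k).
  split; [apply germ_holo_div; [exact Hd | apply germ_holo_pow_id | apply Cpow_nz, Hp]|]. split.
  - intros E. apply Hdp. cbv beta in E.
    replace (d p) with (p ^ k * (d p / p ^ k)) by (field; apply Cpow_nz, Hp). rewrite E. ring.
  - apply (near_mono _ _ _ (near_neq0 (fun w => w) p (Cderivable_continuous _ _ (Cderivable_id p)) Hp)).
    intros w Hw. field. apply Cpow_nz, Hw.
Qed.

Theorem lemma4p9 (rho : R) (a b c : C -> C) (r z : nat) :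
  (0 < rho)%R ->
  holo_on (near_ball 0 rho) a ->
  holo_on (near_ball 0 rho) b ->
  holo_on (near_ball 0 rho) c ->
  (* Delta_beta is not identically zero *)
  (exists w, near_ball 0 rho w /\ discr a b c w <> 0) ->
  (* Delta^{-1}(0) = {0} *)
  (forall w, near_ball 0 rho w -> (discr a b c w = 0 <-> w = 0)) ->
  (* Delta has a holomorphic square root on the disk *)
  (exists sq, holo_on (near_ball 0 rho) sq /\
     forall w, near_ball 0 rho w -> sq w * sq w = discr a b c w) ->
  vorder0 (discr a b c) r ->
  sec_vorder0 a b c z ->
  (2 * z <= r)%nat /\
  forall p1 q1 p2 q2 f : C -> C,
    holo_on (near_ball 0 rho) p1 -> holo_on (near_ball 0 rho) q1 ->
    holo_on (near_ball 0 rho) p2 -> holo_on (near_ball 0 rho) q2 ->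
    holo_on (near_ball 0 rho) f ->
    (* v1 = (p1,q1), v2 = (p2,q2) span line subbundles L1, L2 of V *)
    (forall w, near_ball 0 rho w -> ~ (p1 w = 0 /\ q1 w = 0)) ->
    (forall w, near_ball 0 rho w -> ~ (p2 w = 0 /\ q2 w = 0)) ->
    (* beta = f . v1 v2, i.e. beta is a section of K (x) L1 (x) L2 *)
    (forall w, near_ball 0 rho w ->
       a w = f w * (p1 w * p2 w) /\
       b w = f w * (p1 w * q2 w + q1 w * p2 w) /\
       c w = f w * (q1 w * q2 w)) ->
    exists phi1 phi2 : C -> C,
      holo_on (near_ball 0 rho) phi1 /\ holo_on (near_ball 0 rho) phi2 /\
      forall p, near_ball 0 rho p ->
        stalk_exact p (Nat.div r 2 - z) p1 q1 p2 q2 phi1 phi2.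
Proof.
  intros Hrho Ha Hb Hc _ Hzero _ Hr Hz.
  split; [exact (sec_vorder0_discr_le a b c r z Hr Hz)|].
  intros p1 q1 p2 q2 f Hp1 Hq1 Hp2 Hq2 Hf Hv1 Hv2 Hfac.
  set (d := fun w => p1 w * q2 w - q1 w * p2 w).
  assert (Hd : forall w, near_ball 0 rho w -> w <> 0 -> d w <> 0).
  { intros w Hw Hw0 E. apply Hw0, (Hzero w Hw). unfold discr.
    destruct (Hfac w Hw) as [A1 [A2 A3]]. rewrite A1, A2, A3.
    transitivity ((f w * d w) * (f w * d w)); [unfold d; ring | rewrite E; ring]. }
  exists (fun w => - q1 w), (fun w => p1 w).
  split; [intros w Hw; apply Cderivable_opp, Hq1, Hw|]. split; [exact Hp1|].
  intros p Hp.
  assert (G : forall g, holo_on (near_ball 0 rho) g -> germ_holo p g)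
    by (intros g Hg; exact (germ_holo_of_holo_on rho g p Hg Hp)).
  assert (Hfactor : exists u, germ_holo p u /\ u p <> 0 /\
                               near p (fun w => d w = w ^ (Nat.div r 2 - z) * u w)).
  { destruct (classic (p = 0)) as [E|E]; [subst p|].
    - apply (det_factor_at_0 a b c f); auto. exists rho. split; assumption.
    - apply pow_factor_away_from_0; [exact E | | exact (Hd p Hp E)].
      apply germ_holo_minus; apply germ_holo_mult; auto. }
  destruct Hfactor as [u [Hu [Hu0 Eu]]].
  apply stalk_exact_of_det with (u := u); auto.
  apply (near_mono _ _ _ (near_ball_punctured rho p Hp)). intros w Hw Hwp.
  destruct (Hw Hwp). apply Hd; assumption.
Qed.
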